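(* Let $X$ be a set, $\mathcal{F}\subseteq\mathcal{P}(X)$ a field, $\mathcal{E}\subseteq\mathcal{F}$ an arbitrary subset, and $(\mu^+,\mu^-)$ a conjugate pair of set functions on $\mathcal{F}$ such that $\mu^+(A)=\mu^-(A)$ for all $A\in\mathcal{E}$. Then $(\mathcal{E}, d_{\mu^+})$ is complete if and only if: for every sequence $(A_i)_{i\in\mathbb{N}}$ in $\mathcal{E}$ such that the nets $\{\mu^+(\bigcap_{k=i}^j A_k): i\le j\}$ and $\{\mu^-(\bigcap_{k=i}^j A_k): i\le j\}$ converge to a common limit $L$, the net $\{\bigcap_{k=i}^j A_k: i\le j\}$ converges in $d_{\mu^+}$ to some $A\in\mathcal{E}$ with $\mu^+(A)=L$.
   Context: A field is a family of subsets of $X$ containing $\emptyset$ and closed under complements and finite unions. $I_A$ denotes the indicator function of $A$. Consider $\mu^+,\mu^-:\mathcal{F}\to[0,1]$ with $\mu^\pm(\emptyset)=0$ and $\mu^\pm(X)=1$. $\mu^+$ is subadditive if $I_A\le I_B+I_C\implies \mu^+(A)\le\mu^+(B)+\mu^+(C)$; $\mu^-$ is superadditive if $I_A\ge I_B+I_C\implies\mu^-(A)\ge\mu^-(B)+\mu^-(C)$; $\mu^-$ is co-subadditive with respect to $\mu^+$ if $I_A\le I_B+I_C\implies\mu^-(A)\le\mu^-(B)+\mu^+(C)$; $\mu^+$ is co-superadditive with respect to $\mu^-$ if $I_A\ge I_B+I_C\implies\mu^+(A)\ge\mu^+(B)+\mu^-(C)$ (all for $A,B,C\in\mathcal{F}$).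 The pair $(\mu^+,\mu^-)$ is conjugate if all four properties hold. $d_{\mu^+}(A,B):=\mu^+(A\triangle B)$. Indices range over $i,j\in\mathbb{N}$ with $i\le j$, directed by the product order $(i,j)\le(k,l)\iff i\le k$ and $j\le l$. *)

From HB Require Import structures.
From mathcomp Require Import all_boot all_order all_algebra.
From mathcomp Require Import boolp classical_sets functions reals numfun.
Set Implicit Arguments. Unset Strict Implicit. Unset Printing Implicit Defensive.
Import Order.TTheory GRing.Theory Num.Theory.
Local Open Scope classical_set_scope.
Local Open Scope ring_scope.

Definition is_field (X : Type) (F : set (set X)) : Prop :=
  F set0 /\ (forall A, F A -> F (~` A)) /\ (forall A B, F A -> F B -> F (A `|` B)).

Section Defs.
Context {R : realType} {X : Type}.

Definition subadditive (F : set (set X)) (mup : set X -> R) : Prop :=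
  forall A B C, F A -> F B -> F C ->
    (forall x, (\1_A x : R) <= (\1_B x : R) + (\1_C x : R)) -> mup A <= mup B + mup C.

Definition superadditive (F : set (set X)) (mum : set X -> R) : Prop :=
  forall A B C, F A -> F B -> F C ->
    (forall x, (\1_A x : R) >= (\1_B x : R) + (\1_C x : R)) -> mum A >= mum B + mum C.

Definition co_subadditive (F : set (set X)) (mum mup : set X -> R) : Prop :=
  forall A B C, F A -> F B -> F C ->
    (forall x, (\1_A x : R) <= (\1_B x : R) + (\1_C x : R)) -> mum A <= mum B + mup C.

Definition co_superadditive (F : set (set X)) (mup mum : set X -> R) : Prop :=
  forall A B C, F A -> F B -> F C ->
    (forall x, (\1_A x : R) >= (\1_B x : R) + (\1_C x : R)) -> mup A >= mup B + mum C.

Definition conjugate (F : set (set X)) (mup mum : set X -> R) : Prop :=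
  [/\ subadditive F mup, superadditive F mum,
      co_subadditive F mum mup & co_superadditive F mup mum].

Definition symdiff (A B : set X) : set X := (A `\` B) `|` (B `\` A).

Definition dmu (mup : set X -> R) (A B : set X) : R := mup (symdiff A B).

Definition complete_in (E : set (set X)) (d : set X -> set X -> R) : Prop :=
  forall A : nat -> set X, (forall n, E (A n)) ->
    (forall e : R, 0 < e -> exists N, forall m n, (N <= m)%N -> (N <= n)%N ->
        d (A m) (A n) < e) ->
    exists2 B, E B & forall e : R, 0 < e -> exists N, forall n, (N <= n)%N ->
        d (A n) B < e.

Definition blockcap (A : nat -> set X) (i j : nat) : set X :=
  \bigcap_(k in [set k | (i <= k <= j)%N]) A k.

End Defs.

(* convergence of a real net indexed by {(i,j) : i <= j} with the product order *)
Definition net_cvg {R : realType} (u : nat -> nat -> R) (L : R) : Prop :=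
  forall e : R, 0 < e -> exists i0 j0, (i0 <= j0)%N /\
    forall i j, (i <= j)%N -> (i0 <= i)%N -> (j0 <= j)%N -> `|u i j - L| < e.

From HB Require Import structures.
From mathcomp Require Import all_boot all_order all_algebra.
From mathcomp Require Import boolp classical_sets functions reals numfun.
From mathcomp Require Import lra zify.
Import Order.TTheory GRing.Theory Num.Theory.
Local Open Scope classical_set_scope.
Local Open Scope ring_scope.

Set Implicit Arguments.
Unset Strict Implicit.
Unset Printing Implicit Defensive.

(* Write C i j for the block intersection of A_i, ..., A_j. If the nets
   mu+(C i j) and mu-(C i j) tend to L, then for i <= k <= j conjugacy gives
   d(A_k, C i j) = mu+(A_k \ C i j) <= mu+(A_k) - mu-(C i j), which tends to
   L - L = 0; hence (A_k) is Cauchy, its limit B has mu+(B) = L because mu+ is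
   1-Lipschitz for d, and the blocks converge to B.
   Conversely, a Cauchy sequence has a subsequence A'_k with
   d(A'_k, A'_(k+1)) < t_k - t_(k+1), where t_k = 1/(k+1). Telescoping bounds
   both d(A'_i, A'_j) and mu+(A'_i \ C' i j) by t_i - t_j (C' the blocks of A'), so mu+(A'_k) has a
   limit L and both block nets of A' tend to L. The hypothesis then yields a
   d-limit of the blocks of A', which is a limit of the whole Cauchy sequence. *)

Definition dcauchy {R : realType} {T : Type} (d : T -> T -> R) (A : nat -> T) :=
  forall e : R, 0 < e -> exists N, forall m n, (N <= m)%N -> (N <= n)%N ->
    d (A m) (A n) < e.

Definition dcvg_to {R : realType} {T : Type} (d : T -> T -> R) (A : nat -> T) B :=
  forall e : R, 0 < e -> exists N, forall n, (N <= n)%N -> d (A n) B < e.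

Lemma net_cvg_tailP (R : realType) (u : nat -> nat -> R) (L : R) :
  net_cvg u L <-> forall e, 0 < e -> exists m, forall i j,
    (m <= i)%N -> (i <= j)%N -> `|u i j - L| < e.
Proof.
split=> [cvg_u e e_gt0|tail_u e e_gt0].
  have [i0 [j0 [_ near_u]]] := cvg_u e e_gt0.
  by exists (maxn i0 j0) => i j hi hij; apply: near_u; lia.
have [m near_u] := tail_u e e_gt0.
by exists m, m; split=> // i j hij hi _; apply: near_u.
Qed.

Lemma cauchy_subseq (R : realType) (T : Type) (d : T -> T -> R) (A : nat -> T)
    (eps : nat -> R) :
  dcauchy d A -> (forall k, 0 < eps k) ->
  exists phi : nat -> nat, (forall k, (phi k <= phi k.+1)%N) /\
    forall k m, (phi k <= m)%N -> d (A m) (A (phi k)) < eps k.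
Proof.
move=> cauchyA eps_gt0.
have [N hN] := choice (fun k => cauchyA (eps k) (eps_gt0 k)).
pose phi := fix phi k := if k is k'.+1 then maxn (phi k') (N k'.+1) else N 0.
have phiN k : (N k <= phi k)%N by case: k => //= k; rewrite leq_maxr.
exists phi; split=> [k|k m hm]; first by rewrite /= leq_maxl.
by apply: hN; [apply: leq_trans hm|].
Qed.

Lemma le_telescope (R : realType) (u t : nat -> R) (i : nat) :
  u i <= 0 -> (forall k, (i <= k)%N -> u k.+1 <= u k + (t k - t k.+1)) ->
  forall j, (i <= j)%N -> u j <= t i - t j.
Proof.
move=> ui_le0 stepu; elim=> [|j IH] hij.
  by move: hij; rewrite leqn0 => /eqP <-; rewrite subrr.
case: (ltngtP i j.+1) hij => [/ltnSE hij|//|<-] _; last by rewrite subrr.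
by have := stepu j hij; have := IH hij; lra.
Qed.

Lemma cvg_rate_limit (R : realType) (a t : nat -> R) :
  (forall k, 0 <= t k) ->
  (forall i j, (i <= j)%N -> `|a i - a j| <= t i - t j) ->
  exists L, forall k, `|a k - L| <= t k.
Proof.
move=> t_ge0 a_close.
pose S := range (fun k => a k - t k).
have ubS k : ubound S (a k + t k).
  move=> _ [l _ <-]; have := t_ge0 k; have := t_ge0 l.
  case: (leqP l k) => hlk; [have := a_close l k hlk | have := a_close k l (ltnW hlk)];
    by rewrite ler_norml => /andP[]; lra.
exists (sup S) => k.
have lowk : a k - t k <= sup S.
  apply: sup_upper_bound; last by exists k.
  by split; [exists (a 0%N - t 0%N), 0%N | exists (a 0%N + t 0%N); apply: ubS].
have uppk : sup S <= a k + t k by apply: ge_sup; [exists (a k - t k), k|].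
by rewrite ler_norml; apply/andP; split; lra.
Qed.

Definition rate {R : realType} (k : nat) : R := (k.+1%:R)^-1.

Lemma rate_gt0 (R : realType) k : 0 < rate k :> R.
Proof. by rewrite invr_gt0 ltr0Sn. Qed.

Lemma rate_le (R : realType) i j : (i <= j)%N -> rate j <= rate i :> R.
Proof. by move=> hij; rewrite lef_pV2 ?posrE ?ltr0Sn // ler_nat. Qed.

Lemma rate_ltS (R : realType) k : rate k.+1 < rate k :> R.
Proof. by rewrite ltf_pV2 ?posrE ?ltr0Sn // ltr_nat. Qed.

Lemma rate_small (R : realType) (e : R) : 0 < e -> exists k, rate k < e.
Proof.
move=> e_gt0; exists (Num.Def.archi_bound e^-1).
rewrite /rate -[e in _ < e]invrK ltf_pV2 ?posrE ?invr_gt0 ?ltr0Sn //.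
by apply: lt_le_trans (archi_boundP _) _; rewrite ?ler_nat // invr_ge0 ltW.
Qed.

Lemma net_cvg_rate (R : realType) (u : nat -> nat -> R) (L : R) :
  (forall i j, (i <= j)%N -> `|u i j - L| <= rate i + rate i) -> net_cvg u L.
Proof.
move=> near_u; apply/net_cvg_tailP => e e_gt0.
have /rate_small[k hk] : 0 < e / 3%:R by lra.
exists k => i j hi hij; have := near_u i j hij; have := rate_le R hi; lra.
Qed.

Lemma indic_le_addU (R : realType) (X : Type) (A B C : set X) :
  A `<=` B `|` C -> forall x, (\1_A x : R) <= \1_B x + \1_C x.
Proof.
move=> sA x; rewrite !indicE.
case: (pselect (A x)) => xA; last by rewrite (memNset xA) addr_ge0.
rewrite (mem_set xA); case: (sA x xA) => [xB|xC].
  by rewrite (mem_set xB) lerDl.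
by rewrite (mem_set xC) lerDr.
Qed.

Lemma indic_addU_le (R : realType) (X : Type) (A B C : set X) :
  B `&` C = set0 -> B `|` C `<=` A ->
  forall x, (\1_B x : R) + \1_C x <= \1_A x.
Proof.
move=> /seteqP[disjBC _] sBC x; rewrite !indicE.
case: (pselect (B x)) => xB.
  have xC : ~ C x by move=> xC; apply: (disjBC x).
  by rewrite (mem_set xB) (mem_set (sBC x (or_introl xB))) (memNset xC) addr0.
rewrite (memNset xB) add0r.
case: (pselect (C x)) => xC; last by rewrite (memNset xC).
by rewrite (mem_set xC) (mem_set (sBC x (or_intror xC))).
Qed.

Section BlockIntersections.
Context {X : Type} (A : nat -> set X).

Lemma blockcap_gt i j : (j < i)%N -> blockcap A i j = setT.
Proof.
move=> hji; apply/seteqP; split=> x // _ k /= /andP[hik hkj].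
by move: (leq_trans hik hkj); rewrite leqNgt hji.
Qed.

Lemma blockcap_id i : blockcap A i i = A i.
Proof.
apply/seteqP; split=> x /=; first by apply; rewrite /= leqnn.
by move=> Aix k /= hk; rewrite -(_ : i = k) //; apply/eqP; rewrite eqn_leq.
Qed.

Lemma blockcapS i j : (i <= j.+1)%N -> blockcap A i j.+1 = blockcap A i j `&` A j.+1.
Proof.
move=> hij; apply/seteqP; split=> x /=.
  move=> capx; split; last by apply: capx; rewrite /= hij leqnn.
  by move=> k /= /andP[hik hkj]; apply: capx; rewrite /= hik (leq_trans hkj).
move=> [capx Ax] k /= /andP[hik]; rewrite leq_eqVlt => /orP[/eqP->//|hkj].
by apply: capx; rewrite /= hik -ltnS.
Qed.

Lemma blockcap_sub i j k : (i <= k <= j)%N -> blockcap A i j `<=` A k.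
Proof. by move=> hk x; apply. Qed.

End BlockIntersections.

Section FieldOfSets.
Context {X : Type} (F : set (set X)).
Hypothesis hF : is_field F.

Lemma field0 : F set0. Proof. by case: hF. Qed.
Lemma fieldC A : F A -> F (~` A). Proof. by case: hF => _ [+ _]; apply. Qed.
Lemma fieldU A B : F A -> F B -> F (A `|` B). Proof. by case: hF => _ [_ +]; apply. Qed.
Lemma fieldT : F setT. Proof. by rewrite -setC0; apply/fieldC/field0. Qed.

Lemma fieldI A B : F A -> F B -> F (A `&` B).
Proof. by move=> FA FB; rewrite -[A `&` B]setCK setCI; apply/fieldC/fieldU; apply: fieldC. Qed.

Lemma fieldD A B : F A -> F B -> F (A `\` B).
Proof. by move=> FA FB; rewrite setDE; apply: fieldI => //; apply: fieldC. Qed.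

Lemma field_symdiff A B : F A -> F B -> F (symdiff A B).
Proof. by move=> FA FB; apply: fieldU; apply: fieldD. Qed.

Lemma field_blockcap (A : nat -> set X) i j : (forall n, F (A n)) -> F (blockcap A i j).
Proof.
move=> FA; elim: j => [|j IH].
  by case: i => [|i]; [rewrite blockcap_id | rewrite blockcap_gt //; apply: fieldT].
case: (leqP i j.+1) => hij; last by rewrite blockcap_gt //; apply: fieldT.
by rewrite blockcapS //; apply: fieldI.
Qed.

End FieldOfSets.

Section ConjugatePair.
Context {R : realType} {X : Type} (F : set (set X)) (mup mum : set X -> R).
Hypothesis hF : is_field F.
Hypothesis mup0 : mup set0 = 0.
Hypothesis hcon : conjugate F mup mum.

Lemma mup_subU A B C : F A -> F B -> F C -> A `<=` B `|` C -> mup A <= mup B + mup C.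
Proof. by case: hcon => subadd _ _ _ *; apply: subadd => //; apply: indic_le_addU. Qed.

Lemma mum_subU A B C : F A -> F B -> F C -> A `<=` B `|` C -> mum A <= mum B + mup C.
Proof. by case: hcon => _ _ cosub _ *; apply: cosub => //; apply: indic_le_addU. Qed.

Lemma le_mup A B : F A -> F B -> A `<=` B -> mup A <= mup B.
Proof.
move=> FA FB sAB; have := mup_subU FA FB (field0 hF).
by rewrite mup0 addr0 setU0; apply.
Qed.

Lemma le_mum A B : F A -> F B -> A `<=` B -> mum A <= mum B.
Proof.
move=> FA FB sAB; have := mum_subU FA FB (field0 hF).
by rewrite mup0 addr0 setU0; apply.
Qed.

Lemma mup_le_setD A B : F A -> F B -> mup A <= mup B + mup (A `\` B).
Proof.
move=> FA FB; apply: mup_subU => //; first exact: fieldD.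
by move=> x Ax; case: (pselect (B x)); [left | right].
Qed.

Lemma mum_le_setD A B : F A -> F B -> mum A <= mum B + mup (A `\` B).
Proof.
move=> FA FB; apply: mum_subU => //; first exact: fieldD.
by move=> x Ax; case: (pselect (B x)); [left | right].
Qed.

Lemma mup_setD_le A B : F A -> F B -> B `<=` A -> mup (A `\` B) <= mup A - mum B.
Proof.
move=> FA FB sBA; rewrite lerBrDr; case: hcon => _ _ _ cosuper.
apply: cosuper => //; first exact: fieldD.
by apply: indic_addU_le; [rewrite setDKI | move=> x [[]|/sBA]].
Qed.

Lemma dmuC A B : dmu mup A B = dmu mup B A.
Proof. by rewrite /dmu /symdiff setUC. Qed.

Lemma dmuxx A : dmu mup A A = 0.
Proof. by rewrite /dmu /symdiff setDv setU0. Qed.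

Lemma dmu_sub A B : B `<=` A -> dmu mup A B = mup (A `\` B).
Proof.
move=> sBA; rewrite /dmu /symdiff; congr mup; apply/seteqP; split=> x.
  by move=> [//|[/sBA]].
by move=> ?; left.
Qed.

Lemma dmu_triangle A B C : F A -> F B -> F C ->
  dmu mup A C <= dmu mup A B + dmu mup B C.
Proof.
move=> FA FB FC; apply: mup_subU; try exact: field_symdiff.
move=> x [[Ax Cx]|[Cx Ax]]; case: (pselect (B x)) => Bx.
all: by [left; left | left; right | right; left | right; right].
Qed.

Lemma mup_le_dmu A B : F A -> F B -> mup A <= mup B + dmu mup A B.
Proof.
move=> FA FB; apply: mup_subU => //; first exact: field_symdiff.
by move=> x Ax; case: (pselect (B x)) => Bx; [left | right; left].
Qed.

Lemma dmu_sub_le A B : F A -> F B -> B `<=` A -> dmu mup A B <= mup A - mum B.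
Proof. by move=> FA FB sBA; rewrite dmu_sub //; apply: mup_setD_le. Qed.

End ConjugatePair.

Section Completeness.
Context {R : realType} {X : Type} (F E : set (set X)) (mup mum : set X -> R).
Hypothesis hF : is_field F.
Hypothesis mup0 : mup set0 = 0.
Hypothesis hcon : conjugate F mup mum.
Hypothesis hEF : E `<=` F.
Hypothesis mup_ge0 : forall A, F A -> 0 <= mup A.
Hypothesis mup_mum : forall A, E A -> mup A = mum A.

Section BlockcapNets.
Variables (A : nat -> set X) (L : R).
Hypothesis EA : forall n, E (A n).
Hypothesis cvg_mup : net_cvg (fun i j => mup (blockcap A i j)) L.
Hypothesis cvg_mum : net_cvg (fun i j => mum (blockcap A i j)) L.

Let FA n : F (A n) := hEF (EA n).
Let FC i j : F (blockcap A i j) := field_blockcap hF i j FA.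

Lemma blockcap_tail_close e : 0 < e -> exists m, forall i k j, (m <= i)%N ->
  (i <= k <= j)%N -> dmu mup (A k) (blockcap A i j) < e + e /\ `|mup (A k) - L| < e.
Proof.
move=> e_gt0.
have [m1 near_mup] := (net_cvg_tailP _ _).1 cvg_mup e e_gt0.
have [m2 near_mum] := (net_cvg_tailP _ _).1 cvg_mum e e_gt0.
exists (maxn m1 m2) => i k j hi /andP[hik hkj].
have near_k := near_mup k k ltac:(lia) (leqnn k); rewrite blockcap_id in near_k.
have near_ij := near_mum i j ltac:(lia) (leq_trans hik hkj).
split=> //; apply: le_lt_trans (dmu_sub_le hF hcon (FA k) (FC i j) _) _.
  by apply: blockcap_sub; rewrite hik hkj.
by move: near_k near_ij => /ltr_normlP[? ?] /ltr_normlP[? ?]; lra.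
Qed.

Lemma blockcap_nets_cauchy : dcauchy (dmu mup) A.
Proof.
move=> e e_gt0; have /blockcap_tail_close[m close_m] : 0 < e / 4%:R by lra.
exists m => k l hk hl; pose j := maxn k l.
apply: le_lt_trans (dmu_triangle hF hcon (FA k) (FC m j) (FA l)) _.
rewrite (dmuC _ (blockcap A m j)).
have [close_k _] := close_m m k j (leqnn m) ltac:(lia).
have [close_l _] := close_m m l j (leqnn m) ltac:(lia).
lra.
Qed.

Variable B : set X.
Hypothesis FB : F B.
Hypothesis cvgAB : dcvg_to (dmu mup) A B.

Lemma blockcap_nets_limit_mup : mup B = L.
Proof.
apply/eqP; rewrite -subr_eq0 -normr_le0; apply/ler_addgt0Pr => e e_gt0.
have /blockcap_tail_close[m close_m] : 0 < e / 2%:R by lra.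
have /cvgAB[N near_N] : 0 < e / 2%:R by lra.
pose n := maxn m N; have [_ /ltr_normlP[? ?]] := close_m n n n ltac:(lia) ltac:(lia).
have := near_N n ltac:(lia).
have := mup_le_dmu hF hcon FB (FA n); have := mup_le_dmu hF hcon (FA n) FB.
rewrite dmuC add0r ler_norml => *; apply/andP; split; lra.
Qed.

Lemma blockcap_nets_cvg : net_cvg (fun i j => dmu mup (blockcap A i j) B) 0.
Proof.
apply/net_cvg_tailP => e e_gt0.
have /blockcap_tail_close[m close_m] : 0 < e / 3%:R by lra.
have /cvgAB[N near_N] : 0 < e / 3%:R by lra.
exists (maxn m N) => i j hi hij.
rewrite subr0 ger0_norm; last exact: mup_ge0 (field_symdiff hF (FC i j) FB).
apply: le_lt_trans (dmu_triangle hF hcon (FC i j) (FA i) FB) _.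
have [close_i _] := close_m i i j ltac:(lia) ltac:(lia).
by rewrite dmuC; have := near_N i ltac:(lia); lra.
Qed.

End BlockcapNets.

Lemma complete_blockcap_limit : complete_in E (dmu mup) ->
  forall A : nat -> set X, (forall n, E (A n)) -> forall L : R,
    net_cvg (fun i j => mup (blockcap A i j)) L ->
    net_cvg (fun i j => mum (blockcap A i j)) L ->
    exists2 B, E B /\ mup B = L & net_cvg (fun i j => dmu mup (blockcap A i j) B) 0.
Proof.
move=> complete A EA L cvg_mup cvg_mum.
have [B EB cvgAB] := complete A EA (blockcap_nets_cauchy EA cvg_mup cvg_mum).
exists B; last exact: (blockcap_nets_cvg EA cvg_mup cvg_mum (hEF EB) cvgAB).
by split; last exact: (blockcap_nets_limit_mup EA cvg_mup cvg_mum (hEF EB) cvgAB).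
Qed.

Section FastSubsequence.
Variables (A : nat -> set X) (phi : nat -> nat).
Hypothesis EA : forall n, E (A n).
Hypothesis phi_mono : forall k, (phi k <= phi k.+1)%N.
Hypothesis phi_close : forall k m, (phi k <= m)%N ->
  dmu mup (A m) (A (phi k)) < rate k - rate k.+1.

Let A' k := A (phi k).
Let FA n : F (A n) := hEF (EA n).
Let FA' k : F (A' k) := FA (phi k).
Let C := blockcap A'.
Let FC i j : F (C i j) := field_blockcap hF i j FA'.

Lemma subseq_dmu_step k : dmu mup (A' k) (A' k.+1) < rate k - rate k.+1.
Proof. by rewrite dmuC; apply: phi_close. Qed.

Lemma subseq_dmu_le i j : (i <= j)%N -> dmu mup (A' i) (A' j) <= rate i - rate j.
Proof.
move: j; apply: (le_telescope (u := fun j => dmu mup (A' i) (A' j))) => [|k _].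
  by rewrite dmuxx.
apply: le_trans (dmu_triangle hF hcon (FA' i) (FA' k) (FA' k.+1)) _.
by rewrite lerD2l ltW // subseq_dmu_step.
Qed.

Lemma subseq_blockcap_gap i j : (i <= j)%N -> mup (A' i `\` C i j) <= rate i - rate j.
Proof.
move: j; apply: (le_telescope (u := fun j => mup (A' i `\` C i j))) => [|k hik].
  by rewrite /C blockcap_id setDv mup0.
have step : A' i `\` C i k.+1 `<=` (A' i `\` C i k) `|` (A' k `\` A' k.+1).
  rewrite /C blockcapS; last by rewrite ltnW.
  move=> x [A'ix notCx]; case: (pselect (C i k x)) => Cx; last by left.
  by right; split; [apply: (blockcap_sub _ Cx); rewrite hik leqnn | move=> ?; apply: notCx].
have FD := fieldD hF.
apply: le_trans (mup_subU hcon (FD _ _ (FA' i) (FC i k.+1)) (FD _ _ (FA' i) (FC i k))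
  (FD _ _ (FA' k) (FA' k.+1)) step) _.
rewrite lerD2l; apply: le_trans (ltW (subseq_dmu_step k)).
apply: (le_mup hF mup0 hcon (FD _ _ (FA' k) (FA' k.+1))); first exact: field_symdiff.
by move=> x ?; left.
Qed.

Lemma subseq_blockcap_nets : exists L,
  net_cvg (fun i j => mup (C i j)) L /\ net_cvg (fun i j => mum (C i j)) L.
Proof.
have [L near_L] : exists L, forall k, `|mup (A' k) - L| <= rate k.
  apply: cvg_rate_limit => [k|i j hij]; first exact/ltW/rate_gt0.
  have := subseq_dmu_le hij; rewrite ler_norml => ?.
  have := mup_le_dmu hF hcon (FA' i) (FA' j); have := mup_le_dmu hF hcon (FA' j) (FA' i).
  by rewrite dmuC => *; apply/andP; split; lra.
have near_C (m : set X -> R) i j : (i <= j)%N ->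
    m (C i j) <= mup (A' i) -> mup (A' i) <= m (C i j) + mup (A' i `\` C i j) ->
    `|m (C i j) - L| <= rate i + rate i.
  move=> hij ? ?; have := subseq_blockcap_gap hij; have := rate_gt0 R j.
  by have := near_L i; rewrite !ler_norml => /andP[? ?] *; apply/andP; split; lra.
have sCA' i j : (i <= j)%N -> C i j `<=` A' i.
  by move=> hij; apply: blockcap_sub; rewrite leqnn hij.
exists L; split; apply: net_cvg_rate => i j hij; apply: near_C => //.
- exact: (le_mup hF mup0 hcon (FC i j) (FA' i) (sCA' i j hij)).
- exact: (mup_le_setD hF hcon (FA' i) (FC i j)).
- rewrite (mup_mum (EA (phi i))); apply: (le_mum hF mup0 hcon (FC i j) (FA' i) (sCA' i j hij)).
- rewrite (mup_mum (EA (phi i))); apply: (mum_le_setD hF hcon (FA' i) (FC i j)).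
Qed.

Lemma subseq_limit_cvg B : F B ->
  net_cvg (fun i j => dmu mup (C i j) B) 0 -> dcvg_to (dmu mup) A B.
Proof.
move=> FB /net_cvg_tailP cvgCB e e_gt0.
have /rate_small[k small_k] : 0 < e / 3%:R by lra.
have /cvgCB[m near_m] : 0 < e / 3%:R by lra.
pose i := maxn k m; exists (phi i) => n hn.
apply: le_lt_trans (dmu_triangle hF hcon (FA n) (FA' i) FB) _.
have := near_m i i (leq_maxr _ _) (leqnn i); rewrite /C blockcap_id subr0.
rewrite ger0_norm; last exact: mup_ge0 (field_symdiff hF (FA' i) FB).
have := phi_close hn; have := rate_le R (leq_maxl k m); have := rate_gt0 R i.+1.
rewrite -/(A' i); lra.
Qed.

End FastSubsequence.

Lemma blockcap_limit_complete :
  (forall A : nat -> set X, (forall n, E (A n)) -> forall L : R,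
    net_cvg (fun i j => mup (blockcap A i j)) L ->
    net_cvg (fun i j => mum (blockcap A i j)) L ->
    exists2 B, E B /\ mup B = L & net_cvg (fun i j => dmu mup (blockcap A i j) B) 0) ->
  complete_in E (dmu mup).
Proof.
move=> limits A EA cauchyA.
have gap_gt0 k : 0 < rate k - rate k.+1 :> R by rewrite subr_gt0 rate_ltS.
have [phi [phi_mono phi_close]] := cauchy_subseq cauchyA gap_gt0.
have [L [cvg_mup cvg_mum]] := subseq_blockcap_nets EA phi_mono phi_close.
have [B [EB _] cvgB] := limits _ (fun k => EA (phi k)) L cvg_mup cvg_mum.
by exists B => //; apply: (subseq_limit_cvg EA phi_close (hEF EB) cvgB).
Qed.
End Completeness.

Theorem mainTheorem4 (R : realType) (X : Type) (F E : set (set X))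
    (mup mum : set X -> R) :
  is_field F -> E `<=` F ->
  mup set0 = 0 -> mum set0 = 0 -> mup setT = 1 -> mum setT = 1 ->
  (forall A, F A -> 0 <= mup A <= 1) -> (forall A, F A -> 0 <= mum A <= 1) ->
  conjugate F mup mum ->
  (forall A, E A -> mup A = mum A) ->
  (complete_in E (dmu mup) <->
   forall A : nat -> set X, (forall n, E (A n)) ->
     forall L : R,
       net_cvg (fun i j => mup (blockcap A i j)) L ->
       net_cvg (fun i j => mum (blockcap A i j)) L ->
       exists2 B, E B /\ mup B = L &
         net_cvg (fun i j => dmu mup (blockcap A i j) B) 0).
Proof.
move=> hF hEF mup0 _ _ _ mup_bounds _ hcon mup_mum.
have mup_ge0 A : F A -> 0 <= mup A by case/mup_bounds/andP.
split; first exact: (complete_blockcap_limit hF hcon hEF mup_ge0).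
exact: (blockcap_limit_complete hF mup0 hcon hEF mup_ge0 mup_mum).
Qed.
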